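(* Let $\mathcal{P}\subset\mathbb{R}^d$ be a polytope (cage) with vertices $v_1,\dots,v_K$. For $x\in\mathcal{P}$ let $\widehat{\mathbb{T}}_x$ be the set of non-degenerate simplices $T$ whose vertices are cage vertices of $\mathcal{P}$, which contain $x$, and which contain no cage vertex other than their own vertices (i.e. for every $v\in\{v_1,\dots,v_K\}$, $v\in T$ implies $v$ is a vertex of $T$). Suppose that for every $x\in\mathcal{P}$, $\mathcal{N}(x)=(\mathcal{N}_T(x))_{T\in\widehat{\mathbb{T}}_x}$ is a vector of non-negative numbers summing to one, and define $$\alpha(x;\mathcal{P})=\sum_{T\in\widehat{\mathbb{T}}_x}\mathcal{N}_T(x)\,\alpha(x;\mathcal{P},T).$$ Then $\alpha(\cdot;\mathcal{P})$ is a valid generalized barycentric coordinate function: for all $x\in\mathcal{P}$ and all $i,j$, $\alpha_i(x;\mathcal{P})\ge 0$, $\sum_i\alpha_i(x;\mathcal{P})=1$, $\sum_i\alpha_i(x;\mathcal{P})\,v_i=x$, and $\alpha_i(v_j;\mathcal{P})=\delta_{ij}$.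
   Context: For a non-degenerate (nonzero volume) simplex $T$ in $\mathbb{R}^d$ with vertex set $\{v_{l_0},\dots,v_{l_d}\}\subseteq\{v_1,\dots,v_K\}$ containing $x$, the simplex barycentric coordinates are the unique $\lambda\in\mathbb{R}^{d+1}$ with $\sum_k\lambda_k v_{l_k}=x$ and $\sum_k\lambda_k=1$; the cage coordinates due to $T$, $\alpha(x;\mathcal{P},T)\in\mathbb{R}^K$, have entry $i$ equal to the simplex coordinate of $x$ associated with $v_i$ if $v_i$ is a vertex of $T$, and $0$ otherwise. $\delta_{ij}$ is the Kronecker delta. *)

From HB Require Import structures.
From mathcomp Require Import all_boot all_order all_algebra.
From mathcomp Require Import boolp classical_sets reals.
Set Implicit Arguments. Unset Strict Implicit. Unset Printing Implicit Defensive.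
Import Order.TTheory GRing.Theory Num.Theory.
Local Open Scope ring_scope.

Section Cage.
Variables (R : realType) (d K : nat) (v : 'I_K -> 'rV[R]_d).

Definition in_conv (S : {set 'I_K}) (x : 'rV[R]_d) : Prop :=
  exists c : 'I_K -> R,
    [/\ forall i, 0 <= c i, forall i, i \notin S -> c i = 0,
        \sum_i c i = 1 & \sum_i c i *: v i = x].

Definition in_cage (x : 'rV[R]_d) : Prop := in_conv [set: 'I_K] x.

Definition nondeg_simplex (S : {set 'I_K}) : Prop :=
  #|S| = d.+1 /\ injective v /\
  forall c : 'I_K -> R,
    (forall i, i \notin S -> c i = 0) -> \sum_i c i = 0 ->
    \sum_i c i *: v i = 0 -> forall i, c i = 0.

(* cage coordinates due to T = conv (v_i, i in S): the unique vector with
   entries zero outside S, summing to one and reproducing x *)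
Definition cage_coord_spec (S : {set 'I_K}) (x : 'rV[R]_d) (a : 'rV[R]_K) : Prop :=
  [/\ forall i, i \notin S -> a 0 i = 0, \sum_i a 0 i = 1
    & \sum_i a 0 i *: v i = x].

Definition cage_coord (S : {set 'I_K}) (x : 'rV[R]_d) : 'rV[R]_K :=
  xget 0 (cage_coord_spec S x).

Definition admissible (x : 'rV[R]_d) (S : {set 'I_K}) : Prop :=
  [/\ nondeg_simplex S, in_conv S x &
      forall j, in_conv S (v j) -> j \in S].

Definition That (x : 'rV[R]_d) : {set {set 'I_K}} :=
  [set S : {set 'I_K} | `[< admissible x S >]].

Definition gbc (N : 'rV[R]_d -> {set 'I_K} -> R) (x : 'rV[R]_d) (i : 'I_K) : R :=
  \sum_(S in That x) N x S * cage_coord S x 0 i.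

End Cage.

From HB Require Import structures.
From mathcomp Require Import all_boot all_order all_algebra.
From mathcomp Require Import boolp classical_sets reals.
Import Order.TTheory GRing.Theory Num.Theory.
Local Open Scope ring_scope.
Set Implicit Arguments. Unset Strict Implicit.

(* Affine independence makes the simplex coordinates of x unique, so on every
   admissible simplex they are the weights of any convex combination giving x:
   they are non-negative, sum to one and reproduce x.  At a cage vertex v_j,
   admissibility forces j to be a vertex of the simplex, whose coordinates are
   then the Kronecker delta.  The weights N x S only average these
   properties. *)

Section CageCoordinates.
Variables (R : realType) (d K : nat) (v : 'I_K -> 'rV[R]_d).

Lemma cage_coord_spec_uniq S x a b : nondeg_simplex v S ->
  cage_coord_spec v S x a -> cage_coord_spec v S x b -> a = b.
Proof.
move=> [_ [_ affine_indep]] [a0 a1 a2] [b0 b1 b2].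
apply/matrixP => i j; rewrite (ord1 i); apply/eqP; rewrite -subr_eq0; apply/eqP.
apply: (affine_indep (fun k => a 0 k - b 0 k)).
- by move=> k kS; rewrite a0 // b0 // subr0.
- by rewrite sumrB a1 b1 subrr.
- by under eq_bigr do rewrite scalerBl; rewrite sumrB a2 b2 subrr.
Qed.

Lemma cage_coordE S x a : nondeg_simplex v S ->
  cage_coord_spec v S x a -> cage_coord v S x = a.
Proof.
move=> ndS spec_a; apply: (cage_coord_spec_uniq ndS _ spec_a).
by apply: xgetPex; exists a.
Qed.

Lemma cage_coord_spec_row (S : {set 'I_K}) x (c : 'I_K -> R) :
  (forall i, i \notin S -> c i = 0) -> \sum_i c i = 1 -> \sum_i c i *: v i = x ->
  cage_coord_spec v S x (\row_i c i).
Proof.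
move=> c_out c1 cx; split; first by move=> i iS; rewrite mxE c_out.
- by under eq_bigr do rewrite mxE.
- by under eq_bigr do rewrite mxE.
Qed.

Lemma cage_coordP S x : in_conv v S x -> cage_coord_spec v S x (cage_coord v S x).
Proof.
move=> [c [_ c_out c1 cx]]; apply: xgetPex.
by exists (\row_i c i); apply: cage_coord_spec_row.
Qed.

Lemma cage_coord_ge0 S x i : nondeg_simplex v S -> in_conv v S x ->
  0 <= cage_coord v S x 0 i.
Proof.
move=> ndS [c [c_ge0 c_out c1 cx]].
by rewrite (cage_coordE ndS (cage_coord_spec_row c_out c1 cx)) mxE.
Qed.

Lemma cage_coord_vertex S j : nondeg_simplex v S -> j \in S ->
  cage_coord v S (v j) = \row_k (k == j)%:R.
Proof.
move=> ndS jS; apply: cage_coordE ndS _; apply: cage_coord_spec_row.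
- by move=> k kS; case: eqP => // kj; rewrite kj jS in kS.
- by rewrite (bigD1 j) //= eqxx big1 ?addr0 // => k /negbTE ->.
- by rewrite (bigD1 j) //= eqxx scale1r big1 ?addr0 // => k /negbTE ->; rewrite scale0r.
Qed.

Lemma in_cage_vertex j : in_cage v (v j).
Proof.
exists (fun k => (k == j)%:R); split=> [k|k|//|]; rewrite ?ler0n ?inE //.
- by rewrite (bigD1 j) //= eqxx big1 ?addr0 // => k /negbTE ->.
- by rewrite (bigD1 j) //= eqxx scale1r big1 ?addr0 // => k /negbTE ->; rewrite scale0r.
Qed.

Lemma admissible_That x S : S \in That v x -> admissible v x S.
Proof. by rewrite inE => /asboolP. Qed.

End CageCoordinates.

Section GeneralizedBarycentric.
Variables (R : realType) (d K : nat) (v : 'I_K -> 'rV[R]_d).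
Variable N : 'rV[R]_d -> {set 'I_K} -> R.

Lemma gbc_ge0 x i : (forall S, S \in That v x -> 0 <= N x S) -> 0 <= gbc v N x i.
Proof.
move=> N_ge0; apply: sumr_ge0 => S SThat; have [ndS xS _] := admissible_That SThat.
by rewrite mulr_ge0 ?N_ge0 ?cage_coord_ge0.
Qed.

Lemma gbc_sum x : \sum_i gbc v N x i = \sum_(S in That v x) N x S.
Proof.
rewrite exchange_big /=; apply: eq_bigr => S /admissible_That [_ xS _].
by rewrite -mulr_sumr; have [_ -> _] := cage_coordP xS; rewrite mulr1.
Qed.

Lemma gbc_reproduce x :
  \sum_i gbc v N x i *: v i = (\sum_(S in That v x) N x S) *: x.
Proof.
under eq_bigr do rewrite scaler_suml; rewrite exchange_big scaler_suml /=.
apply: eq_bigr => S /admissible_That [_ xS _].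
under eq_bigr do rewrite -scalerA.
by rewrite -scaler_sumr; have [_ _ ->] := cage_coordP xS.
Qed.

Lemma gbc_vertex i j :
  gbc v N (v j) i = (\sum_(S in That v (v j)) N (v j) S) * (i == j)%:R.
Proof.
rewrite mulr_suml; apply: eq_bigr => S /admissible_That [ndS vjS vertS].
by rewrite cage_coord_vertex ?vertS // mxE.
Qed.

End GeneralizedBarycentric.

Theorem proposition2 (R : realType) (d K : nat) (v : 'I_K -> 'rV[R]_d)
    (N : 'rV[R]_d -> {set 'I_K} -> R) :
  (* v_1, ..., v_K are the (distinct) vertices of the polytope P = conv{v_i} *)
  injective v ->
  (forall j, ~ in_conv v [set~ j] (v j)) ->
  (* N(x) is a probability vector indexed by \hat T_x, for x in P *)
  (forall x, in_cage v x ->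
     (forall S, S \in That v x -> 0 <= N x S) /\
     \sum_(S in That v x) N x S = 1) ->
  (forall x, in_cage v x ->
     [/\ forall i, 0 <= gbc v N x i,
         \sum_i gbc v N x i = 1 &
         \sum_i gbc v N x i *: v i = x]) /\
  (forall i j, gbc v N (v j) i = (i == j)%:R).
Proof.
move=> _ _ N_prob; split.
  move=> x /N_prob [N_ge0 N_sum1].
  by rewrite gbc_sum gbc_reproduce N_sum1 scale1r; split=> // i; apply: gbc_ge0.
move=> i j; have [_ N_sum1] := N_prob _ (in_cage_vertex v j).
by rewrite gbc_vertex N_sum1 mul1r.
Qed.
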